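(* Let $\{x_i\}_{i\in[N]}$ be the global solution of the delayed consensus system described in the context. Then for all $t\ge\tau$, \[ \max_{i\in[N]}|\dot x_i(t)|\le d_x(t-\tau)+\int_{t-\tau}^{t-\sigma}\max_{i\in[N]}|\dot x_i(s)|\,\mathrm ds. \]
   Context: Let $N\ge2$, $d\ge1$ be integers, $[N]=\{1,\dots,N\}$, $0\le\sigma\le\tau$. Let $\psi:[0,\infty)\to[0,\infty)$ be continuous, nonincreasing, positive everywhere, with $\sup\psi\le1$. Given $x_i^0\in C([-\tau,0],\mathbb{R}^d)$, $\{x_i\}$ is the global solution (continuous on $[-\tau,\infty)$, continuously differentiable on $[0,\infty)$, one-sided at $0$) of $\dot x_i(t)=\sum_{j\ne i}a_{ij}(t)(x_j(t-\tau)-x_i(t-\sigma))$ for $t>0$, with $a_{ij}(t)=\frac1{N-1}\psi(|x_i(t-\sigma)-x_j(t-\tau)|)$ and $x_i=x_i^0$ on $[-\tau,0]$. $d_x(t):=\max_{i,j\in[N]}|x_i(t)-x_j(t)|$. *)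

From Stdlib Require Import Reals.
From Coquelicot Require Import Coquelicot.
Open Scope R_scope.

(* Points of R^d are functions nat -> R, only components 0..d-1 matter.
   Agents are indexed by 0..N-1 (i.e. [N] shifted by one). *)

Fixpoint sumR (n : nat) (f : nat -> R) : R :=
  match n with O => 0 | S m => sumR m f + f m end.

(* maxR n f = max(0, f 0, ..., f (n-1)); used only for nonnegative f and n >= 1 *)
Fixpoint maxR (n : nat) (f : nat -> R) : R :=
  match n with O => 0 | S m => Rmax (maxR m f) (f m) end.

Definition enorm (d : nat) (u : nat -> R) : R := sqrt (sumR d (fun k => u k ^ 2)).

Definition vsub (u w : nat -> R) : nat -> R := fun k => u k - w k.

Definition diam (N d : nat) (x : nat -> R -> nat -> R) (t : R) : R :=
  maxR N (fun i => maxR N (fun j => enorm d (vsub (x i t) (x j t)))).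

Definition cont_within_ge (a : R) (f : R -> R) (t : R) : Prop :=
  forall eps, 0 < eps -> exists delta, 0 < delta /\
    forall s, a <= s -> Rabs (s - t) < delta -> Rabs (f s - f t) < eps.

Definition right_deriv (f : R -> R) (t l : R) : Prop :=
  filterlim (fun h => (f (t + h) - f t) / h) (at_right 0) (locally l).

Definition weight (N d : nat) (psi : R -> R) (sigma tau : R)
  (x : nat -> R -> nat -> R) (i j : nat) (t : R) : R :=
  / INR (N - 1) * psi (enorm d (vsub (x i (t - sigma)) (x j (t - tau)))).

Definition rhs (N d : nat) (psi : R -> R) (sigma tau : R)
  (x : nat -> R -> nat -> R) (i : nat) (t : R) (k : nat) : R :=
  sumR N (fun j => if Nat.eqb j i then 0
                   else weight N d psi sigma tau x i j t
                        * (x j (t - tau) k - x i (t - sigma) k)).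

From Stdlib Require Import Reals Lra Lia.
From Coquelicot Require Import Coquelicot.
Open Scope R_scope.

(* For t > 0 the velocity of agent i is a sum over j <> i of the vectors
   x_j(t - tau) - x_i(t - sigma) with weights psi(..)/(N - 1) in [0, 1/(N - 1)],
   so it suffices to bound each such vector.  It splits as
   (x_j - x_i)(t - tau), of norm at most d_x(t - tau), plus
   x_i(t - tau) - x_i(t - sigma), whose norm is at most the integral of the
   maximal speed over [t - tau, t - sigma]: this is the fundamental theorem of
   calculus applied to the scalar function s |-> <e, x_i(s)>, where e is that
   increment.  The remaining case t = tau = 0 follows by letting t decrease to 0,
   since positions and velocities are right-continuous there. *)

Lemma sumR_ext n f g :
  (forall k, (k < n)%nat -> f k = g k) -> sumR n f = sumR n g.
Proof.
  induction n as [|n IH]; intros H; simpl; [reflexivity|].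
  rewrite IH, H; [reflexivity|lia|intros; apply H; lia].
Qed.

Lemma sumR_le n f g :
  (forall k, (k < n)%nat -> f k <= g k) -> sumR n f <= sumR n g.
Proof.
  induction n as [|n IH]; intros H; simpl; [lra|].
  apply Rplus_le_compat; [apply IH; intros; apply H|apply H]; lia.
Qed.

Lemma sumR_zero n : sumR n (fun _ => 0) = 0.
Proof. induction n as [|n IH]; simpl; lra. Qed.

Lemma sumR_plus n f g : sumR n (fun k => f k + g k) = sumR n f + sumR n g.
Proof. induction n as [|n IH]; simpl; [lra|]. rewrite IH. ring. Qed.

Lemma sumR_scal n c f : sumR n (fun k => c * f k) = c * sumR n f.
Proof. induction n as [|n IH]; simpl; [lra|]. rewrite IH. ring. Qed.

Lemma sumR_nonneg n f : (forall k, (k < n)%nat -> 0 <= f k) -> 0 <= sumR n f.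
Proof. intros H. rewrite <- (sumR_zero n). apply sumR_le. exact H. Qed.

Lemma sumR_nonneg_eq0 n f :
  (forall k, (k < n)%nat -> 0 <= f k) -> sumR n f = 0 ->
  forall k, (k < n)%nat -> f k = 0.
Proof.
  induction n as [|n IH]; intros Hpos Hsum k Hk; simpl in Hsum; [lia|].
  assert (Hrest : 0 <= sumR n f) by (apply sumR_nonneg; intros; apply Hpos; lia).
  assert (Hlast : 0 <= f n) by (apply Hpos; lia).
  destruct (Nat.eq_dec k n) as [->|Hkn]; [lra|].
  apply IH; [intros; apply Hpos; lia|lra|lia].
Qed.

Lemma sumR_except n i c :
  sumR n (fun j => if Nat.eqb j i then 0 else c)
  = (INR n - if Nat.ltb i n then 1 else 0) * c.
Proof.
  induction n as [|n IH]; simpl sumR; [simpl; ring|]. rewrite IH, S_INR.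
  destruct (Nat.eqb_spec n i), (Nat.ltb_spec i n), (Nat.ltb_spec i (S n));
    try lia; ring.
Qed.

Lemma maxR_ge0 n f : 0 <= maxR n f.
Proof.
  induction n as [|n IH]; simpl; [lra|].
  eapply Rle_trans; [exact IH|apply Rmax_l].
Qed.

Lemma le_maxR n f i : (i < n)%nat -> f i <= maxR n f.
Proof.
  induction n as [|n IH]; intros Hi; simpl; [lia|].
  destruct (Nat.eq_dec i n) as [->|Hin]; [apply Rmax_r|].
  eapply Rle_trans; [apply IH; lia|apply Rmax_l].
Qed.

Lemma maxR_lub n f c :
  0 <= c -> (forall i, (i < n)%nat -> f i <= c) -> maxR n f <= c.
Proof.
  induction n as [|n IH]; intros Hc H; simpl; [exact Hc|].
  apply Rmax_lub; [apply IH|apply H]; auto.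
Qed.

Definition inner (d : nat) (u w : nat -> R) : R := sumR d (fun k => u k * w k).

Lemma inner_comm d u w : inner d u w = inner d w u.
Proof. apply sumR_ext. intros; ring. Qed.

Lemma inner_vsub_r d u w z : inner d u (vsub w z) = inner d u w - inner d u z.
Proof.
  unfold inner, Rminus. rewrite <- (Rmult_1_l (sumR d (fun k => u k * z k))), Ropp_mult_distr_l.
  rewrite <- sumR_scal, <- sumR_plus. apply sumR_ext. intros; unfold vsub; ring.
Qed.

Lemma enorm_ge0 d u : 0 <= enorm d u.
Proof. apply sqrt_pos. Qed.

Lemma enorm_ext d u w :
  (forall k, (k < d)%nat -> u k = w k) -> enorm d u = enorm d w.
Proof. intros H. unfold enorm. f_equal. apply sumR_ext. intros k Hk. rewrite H; auto. Qed.

Lemma enorm_sq d u : enorm d u * enorm d u = inner d u u.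
Proof.
  unfold enorm, inner. rewrite sqrt_sqrt.
  - apply sumR_ext. intros; ring.
  - apply sumR_nonneg. intros; apply pow2_ge_0.
Qed.

Lemma enorm_eq0 d u : enorm d u = 0 -> forall k, (k < d)%nat -> u k = 0.
Proof.
  unfold enorm. intros H k Hk.
  assert (Hsq : forall k, (k < d)%nat -> 0 <= u k ^ 2) by (intros; apply pow2_ge_0).
  apply sqrt_eq_0 in H; [|apply sumR_nonneg; exact Hsq].
  pose proof (sumR_nonneg_eq0 d _ Hsq H k Hk). nra.
Qed.

Lemma inner_enorm0_l d u w : enorm d u = 0 -> inner d u w = 0.
Proof.
  intros H. unfold inner. rewrite <- (sumR_zero d). apply sumR_ext.
  intros k Hk. rewrite (enorm_eq0 d u H k Hk). ring.
Qed.

Lemma inner_le_enorm d u w : inner d u w <= enorm d u * enorm d w.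
Proof.
  set (a := enorm d u). set (b := enorm d w).
  assert (Ha : 0 <= a) by apply enorm_ge0.
  assert (Hb : 0 <= b) by apply enorm_ge0.
  destruct (Req_dec a 0) as [Ha0|Ha0].
  { rewrite inner_enorm0_l by exact Ha0. nra. }
  destruct (Req_dec b 0) as [Hb0|Hb0].
  { rewrite inner_comm, inner_enorm0_l by exact Hb0. nra. }
  assert (Hsq : 0 <= sumR d (fun k => (b * u k - a * w k) ^ 2))
    by (apply sumR_nonneg; intros; apply pow2_ge_0).
  assert (Hexp : sumR d (fun k => (b * u k - a * w k) ^ 2)
                 = 2 * (a * b) * (a * b - inner d u w)).
  { rewrite (sumR_ext _ _ (fun k => b * b * (u k * u k) + (-2 * (a * b) * (u k * w k))
                                    + a * a * (w k * w k))) by (intros; ring).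
    rewrite !sumR_plus, !sumR_scal.
    change (b * b * inner d u u + -2 * (a * b) * inner d u w + a * a * inner d w w
            = 2 * (a * b) * (a * b - inner d u w)).
    rewrite <- !enorm_sq. fold a b. ring. }
  assert (Hab : 0 < a * b) by (apply Rmult_lt_0_compat; lra).
  rewrite Hexp in Hsq. clearbody a b. set (p := a * b) in *. nra.
Qed.

Lemma enorm_add_le d u w :
  enorm d (fun k => u k + w k) <= enorm d u + enorm d w.
Proof.
  apply Rsqr_incr_0_var; [|pose proof (enorm_ge0 d u); pose proof (enorm_ge0 d w); lra].
  unfold Rsqr. rewrite enorm_sq.
  assert (Hexp : inner d (fun k => u k + w k) (fun k => u k + w k)
                 = inner d u u + 2 * inner d u w + inner d w w).
  { unfold inner. rewrite <- sumR_scal, <- !sumR_plus. apply sumR_ext. intros; ring. }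
  rewrite Hexp, <- !enorm_sq. pose proof (inner_le_enorm d u w). nra.
Qed.

Lemma enorm_scal d c u : enorm d (fun k => c * u k) = Rabs c * enorm d u.
Proof.
  unfold enorm.
  rewrite (sumR_ext _ _ (fun k => c² * u k ^ 2)) by (intros; unfold Rsqr; ring).
  rewrite sumR_scal, sqrt_mult_alt, sqrt_Rsqr_abs by apply Rle_0_sqr. reflexivity.
Qed.

Lemma enorm_zero d : enorm d (fun _ => 0) = 0.
Proof.
  rewrite (enorm_ext d _ (fun k => 0 * 0)) by (intros; ring).
  rewrite enorm_scal, Rabs_R0. ring.
Qed.

Lemma enorm_sub_le d u w : enorm d (vsub u w) <= enorm d u + enorm d w.
Proof.
  rewrite (enorm_ext d _ (fun k => u k + -1 * w k)) by (intros; unfold vsub; ring).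
  eapply Rle_trans; [apply enorm_add_le|].
  rewrite enorm_scal, Rabs_left by lra. lra.
Qed.

Lemma enorm_sumR_le d n (F : nat -> nat -> R) :
  enorm d (fun k => sumR n (fun j => F j k)) <= sumR n (fun j => enorm d (F j)).
Proof.
  induction n as [|n IH]; simpl.
  - rewrite enorm_zero. lra.
  - eapply Rle_trans; [apply enorm_add_le|]. lra.
Qed.

Lemma continuous_sumR n (F : nat -> R -> R) s :
  (forall k, (k < n)%nat -> continuous (F k) s) ->
  continuous (fun u => sumR n (fun k => F k u)) s.
Proof.
  induction n as [|n IH]; intros H; simpl; [apply continuous_const|].
  apply (continuous_plus (fun u => sumR n (fun k => F k u)) (F n));
    [apply IH; intros; apply H|apply H]; lia.
Qed.

Lemma continuous_enorm d (u : R -> nat -> R) s :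
  (forall k, (k < d)%nat -> continuous (fun r => u r k) s) ->
  continuous (fun r => enorm d (u r)) s.
Proof.
  intros H. apply continuous_sqrt_comp.
  apply (continuous_sumR d (fun k r => u r k ^ 2)). intros k Hk.
  apply (continuous_ext (fun r => u r k * (u r k * 1))); [intros; simpl; ring|].
  apply (continuous_mult (fun r => u r k) (fun r => u r k * 1)); [auto|].
  apply (continuous_mult (fun r => u r k) (fun _ => 1)); [auto|apply continuous_const].
Qed.

Lemma continuous_Rmax (f g : R -> R) s :
  continuous f s -> continuous g s -> continuous (fun r => Rmax (f r) (g r)) s.
Proof.
  intros Hf Hg.
  apply (continuous_ext (fun r => (f r + g r + Rabs (f r - g r)) * / 2)).
  { intros r. unfold Rmax. destruct Rle_dec; unfold Rabs; destruct Rcase_abs; lra. }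
  apply (continuous_mult (fun r => f r + g r + Rabs (f r - g r)) (fun _ => / 2));
    [|apply continuous_const].
  apply (continuous_plus (fun r => f r + g r)); [apply (continuous_plus f g); auto|].
  apply continuous_Rabs_comp. apply (continuous_minus f g); auto.
Qed.

Lemma continuous_maxR n (F : nat -> R -> R) s :
  (forall k, (k < n)%nat -> continuous (F k) s) ->
  continuous (fun u => maxR n (fun k => F k u)) s.
Proof.
  induction n as [|n IH]; intros H; simpl; [apply continuous_const|].
  apply continuous_Rmax; [apply IH; intros; apply H|apply H]; lia.
Qed.

Lemma cont_within_ge_mono a a' f t :
  a <= a' -> cont_within_ge a f t -> cont_within_ge a' f t.
Proof.
  intros Ha H eps Heps. destruct (H eps Heps) as [delta [Hdelta Hf]].
  exists delta. split; [exact Hdelta|]. intros s Hs. apply Hf. lra.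
Qed.

(* Clamping reduces the one-sided continuity hypotheses to Coquelicot's two-sided [continuous]. *)
Lemma continuous_clamp a f :
  (forall s, a <= s -> cont_within_ge a f s) ->
  forall s, continuous (fun u => f (Rmax u a)) s.
Proof.
  intros H s. apply filterlim_locally. intros eps.
  destruct (H (Rmax s a) (Rmax_r _ _) eps (cond_pos eps)) as [delta [Hdelta Hf]].
  exists (mkposreal delta Hdelta). intros u Hu. apply Hf; [apply Rmax_r|].
  change (Rabs (u - s) < delta) in Hu.
  apply Rle_lt_trans with (Rabs (u - s)); [|exact Hu].
  unfold Rmax. destruct Rle_dec, Rle_dec; unfold Rabs; repeat destruct Rcase_abs; lra.
Qed.

Lemma locally_clamp a (f : R -> R) s :
  a < s -> locally s (fun u => f u = f (Rmax u a)).
Proof.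
  intros Has. assert (Hpos : 0 < s - a) by lra.
  exists (mkposreal _ Hpos). intros u Hu. change (Rabs (u - s) < s - a) in Hu.
  apply Rabs_def2 in Hu. rewrite Rmax_left by lra. reflexivity.
Qed.

Lemma le_at_right_limit (f g : R -> R) a :
  continuous f a -> continuous g a -> (forall s, a < s -> f s <= g s) -> f a <= g a.
Proof.
  intros Hf Hg Hfg. cut (0 <= g a - f a); [lra|].
  apply (@closed_filterlim_loc _ _ (at_right a)
           (Proper_StrongProper _ (at_right_proper_filter a)) (fun s => g s - f s)).
  - eapply filterlim_filter_le_1; [apply filter_le_within|].
    exact (continuous_minus g f a Hg Hf).
  - exists (mkposreal 1 Rlt_0_1). intros s _ Hs. specialize (Hfg s Hs). lra.
  - apply closed_ge.
Qed.

Lemma is_derive_sumR n (F : nat -> R -> R) (F' : nat -> R) s :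
  (forall k, (k < n)%nat -> is_derive (F k) s (F' k)) ->
  is_derive (fun u => sumR n (fun k => F k u)) s (sumR n F').
Proof.
  induction n as [|n IH]; intros H; simpl; [apply (is_derive_const 0)|].
  apply (is_derive_plus (fun u => sumR n (fun k => F k u)) (F n));
    [apply IH; intros; apply H|apply H]; lia.
Qed.

Lemma increment_le_RInt (g g' h : R -> R) a b :
  a <= b ->
  (forall s, a <= s <= b -> continuous g s) ->
  (forall s, a < s < b -> is_derive g s (g' s)) ->
  (forall s, a <= s <= b -> g' s <= h s) ->
  (forall s, continuous h s) ->
  g b - g a <= RInt h a b.
Proof.
  intros Hab Hg Hg' Hle Hh.
  assert (HI : forall s, is_derive (RInt h a) s (h s)).
  { intros s. apply (is_derive_RInt h (RInt h a) a s); [|apply Hh].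
    apply filter_forall. intros r.
    apply (@RInt_correct R_CompleteNormedModule), (@ex_RInt_continuous R_CompleteNormedModule).
    auto. }
  destruct (MVT_gen (fun s => g s - RInt h a s) a b (fun s => g' s - h s))
    as [c [Hc Heq]]; rewrite Rmin_left, Rmax_right in * by exact Hab.
  - intros s Hs. apply (is_derive_minus g (RInt h a)); auto.
  - intros s Hs. apply continuity_pt_filterlim.
    apply (continuous_minus g (RInt h a)); [auto|].
    apply ex_derive_continuous. exists (h s). apply HI.
  - rewrite RInt_point in Heq. change zero with 0 in Heq.
    specialize (Hle c Hc). nra.
Qed.

Lemma enorm_increment_le_RInt d (y w : R -> nat -> R) (h : R -> R) a b :
  a <= b ->
  (forall k s, (k < d)%nat -> a <= s <= b -> continuous (fun r => y r k) s) ->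
  (forall k s, (k < d)%nat -> a < s < b -> is_derive (fun r => y r k) s (w s k)) ->
  (forall s, a <= s <= b -> enorm d (w s) <= h s) ->
  (forall s, continuous h s) ->
  enorm d (vsub (y b) (y a)) <= RInt h a b.
Proof.
  intros Hab Hy Hy' Hw Hh. set (e := vsub (y b) (y a)).
  assert (Hex : ex_RInt h a b)
    by (apply (@ex_RInt_continuous R_CompleteNormedModule); auto).
  assert (HI : 0 <= RInt h a b).
  { apply RInt_ge_0; [exact Hab|exact Hex|]. intros s Hs.
    eapply Rle_trans; [apply enorm_ge0|apply Hw; lra]. }
  (* s |-> <e, y s> has derivative <e, w s> <= |e| h s, and increases by |e|^2 on [a, b]. *)
  assert (Hproj : inner d e e <= enorm d e * RInt h a b).
  { change (inner d e (vsub (y b) (y a)) <= scal (enorm d e) (RInt h a b)).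
    rewrite inner_vsub_r, <- (RInt_scal h a b (enorm d e) Hex).
    apply (increment_le_RInt (fun s => inner d e (y s)) (fun s => inner d e (w s))); auto.
    - intros s Hs. apply (continuous_sumR d (fun k r => e k * y r k)). intros k Hk.
      apply (continuous_scal_r (e k) (fun r => y r k)). auto.
    - intros s Hs. apply (is_derive_sumR d (fun k r => e k * y r k)). intros k Hk.
      apply is_derive_scal. auto.
    - intros s Hs. eapply Rle_trans; [apply inner_le_enorm|].
      apply Rmult_le_compat_l; [apply enorm_ge0|auto].
    - intros s. apply (continuous_scal_r (enorm d e) h). auto. }
  rewrite <- enorm_sq in Hproj. pose proof (enorm_ge0 d e).
  destruct (Req_dec (enorm d e) 0) as [He|He]; [lra|].
  apply Rmult_le_reg_l with (enorm d e); lra.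
Qed.

Lemma le_diam N d x t i j :
  (i < N)%nat -> (j < N)%nat -> enorm d (vsub (x i t) (x j t)) <= diam N d x t.
Proof.
  intros Hi Hj. unfold diam.
  eapply Rle_trans; [|apply (le_maxR N _ i Hi)].
  apply (le_maxR N (fun j => enorm d (vsub (x i t) (x j t))) j Hj).
Qed.

Lemma continuous_diam N d (x : nat -> R -> nat -> R) t :
  (forall i k, (i < N)%nat -> (k < d)%nat -> continuous (fun s => x i s k) t) ->
  continuous (fun s => diam N d x s) t.
Proof.
  intros Hx. unfold diam.
  apply (continuous_maxR N (fun i s => maxR N (fun j => enorm d (vsub (x i s) (x j s))))).
  intros i Hi. apply (continuous_maxR N (fun j s => enorm d (vsub (x i s) (x j s)))).
  intros j Hj. apply (continuous_enorm d (fun s => vsub (x i s) (x j s))).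
  intros k Hk. apply (continuous_minus (fun s => x i s k) (fun s => x j s k)); auto.
Qed.

Lemma enorm_delayed_gap_le N d (x : nat -> R -> nat -> R) i j a b :
  (i < N)%nat -> (j < N)%nat ->
  enorm d (vsub (x j a) (x i b)) <= diam N d x a + enorm d (vsub (x i b) (x i a)).
Proof.
  intros Hi Hj.
  rewrite (enorm_ext d _ (vsub (vsub (x j a) (x i a)) (vsub (x i b) (x i a))))
    by (intros; unfold vsub; ring).
  eapply Rle_trans; [apply enorm_sub_le|].
  apply Rplus_le_compat_r. apply le_diam; assumption.
Qed.

Lemma enorm_rhs_le N d psi sigma tau (x : nat -> R -> nat -> R) i t C :
  (2 <= N)%nat -> (i < N)%nat ->
  (forall r, 0 <= r -> 0 <= psi r <= 1) ->
  (forall j, (j < N)%nat -> enorm d (vsub (x j (t - tau)) (x i (t - sigma))) <= C) ->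
  enorm d (rhs N d psi sigma tau x i t) <= C.
Proof.
  intros HN Hi Hpsi HC.
  set (c := / INR (N - 1)).
  assert (HN1 : 0 < INR (N - 1)) by (apply lt_0_INR; lia).
  assert (Hc : 0 < c) by (apply Rinv_0_lt_compat; exact HN1).
  unfold rhs. eapply Rle_trans; [apply enorm_sumR_le|].
  eapply Rle_trans; [apply (sumR_le N _ (fun j => if Nat.eqb j i then 0 else c * C))|].
  - intros j Hj. destruct (Nat.eqb j i); [rewrite enorm_zero; lra|].
    set (W := weight N d psi sigma tau x i j t).
    assert (HW : 0 <= W <= c).
    { unfold W, weight. fold c.
      specialize (Hpsi _ (enorm_ge0 d (vsub (x i (t - sigma)) (x j (t - tau))))). nra. }
    change (enorm d (fun k => W * vsub (x j (t - tau)) (x i (t - sigma)) k) <= c * C).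
    rewrite enorm_scal, Rabs_pos_eq by lra.
    specialize (HC j Hj). pose proof (enorm_ge0 d (vsub (x j (t - tau)) (x i (t - sigma)))).
    nra.
  - rewrite sumR_except. destruct (Nat.ltb_spec i N) as [_|]; [|lia].
    replace (INR N - 1) with (INR (N - 1)) by (rewrite minus_INR by lia; reflexivity).
    unfold c. rewrite <- Rmult_assoc, Rinv_r by lra. lra.
Qed.

Section DelayedConsensus.

Variables (N d : nat) (sigma tau : R) (psi : R -> R) (x v : nat -> R -> nat -> R).

Hypothesis HN : (2 <= N)%nat.
Hypothesis Hsigma : 0 <= sigma.
Hypothesis Hsigma_tau : sigma <= tau.
Hypothesis Hpsi : forall r, 0 <= r -> 0 <= psi r <= 1.
Hypothesis Hx_cont : forall i k t, (i < N)%nat -> (k < d)%nat -> -tau <= t ->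
  cont_within_ge (-tau) (fun s => x i s k) t.
Hypothesis Hx_deriv : forall i k t, (i < N)%nat -> (k < d)%nat -> 0 < t ->
  is_derive (fun s => x i s k) t (v i t k).
Hypothesis Hv_cont : forall i k t, (i < N)%nat -> (k < d)%nat -> 0 <= t ->
  cont_within_ge 0 (fun s => v i s k) t.
Hypothesis Hsys : forall i k t, (i < N)%nat -> (k < d)%nat -> 0 < t ->
  v i t k = rhs N d psi sigma tau x i t k.

Definition max_speed (s : R) : R := maxR N (fun i => enorm d (v i s)).

Lemma continuous_x_clamp i k s :
  (i < N)%nat -> (k < d)%nat -> continuous (fun u => x i (Rmax u 0) k) s.
Proof.
  intros Hi Hk. apply (continuous_clamp 0 (fun u => x i u k)). intros t Ht.
  apply cont_within_ge_mono with (-tau); [lra|]. apply Hx_cont; auto; lra.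
Qed.

Lemma continuous_max_speed_clamp s : continuous (fun u => max_speed (Rmax u 0)) s.
Proof.
  apply (continuous_maxR N (fun i u => enorm d (v i (Rmax u 0)))). intros i Hi.
  apply (continuous_enorm d (fun u => v i (Rmax u 0))). intros k Hk.
  apply (continuous_clamp 0 (fun u => v i u k)). auto.
Qed.

Lemma RInt_max_speed_clamp a b :
  0 <= a -> a <= b -> RInt max_speed a b = RInt (fun s => max_speed (Rmax s 0)) a b.
Proof.
  intros Ha Hab. apply RInt_ext. intros s Hs.
  rewrite Rmin_left, Rmax_right in Hs by exact Hab. rewrite Rmax_left by lra. reflexivity.
Qed.

Lemma RInt_max_speed_ge0 a b : 0 <= a -> a <= b -> 0 <= RInt max_speed a b.
Proof.
  intros Ha Hab. rewrite RInt_max_speed_clamp by assumption.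
  apply RInt_ge_0; [exact Hab| |intros; apply maxR_ge0].
  apply (@ex_RInt_continuous R_CompleteNormedModule). intros; apply continuous_max_speed_clamp.
Qed.

Lemma enorm_increment_le_RInt_max_speed i a b :
  (i < N)%nat -> 0 <= a -> a <= b ->
  enorm d (vsub (x i b) (x i a)) <= RInt max_speed a b.
Proof.
  intros Hi Ha Hab. rewrite RInt_max_speed_clamp by assumption.
  replace (x i b) with (x i (Rmax b 0)) by (rewrite Rmax_left by lra; reflexivity).
  replace (x i a) with (x i (Rmax a 0)) by (rewrite Rmax_left by lra; reflexivity).
  apply (enorm_increment_le_RInt d (fun s => x i (Rmax s 0)) (v i)); auto.
  - intros k s Hk _. apply continuous_x_clamp; assumption.
  - intros k s Hk Hs. apply (is_derive_ext_loc (fun u => x i u k)).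
    + apply (locally_clamp 0 (fun u => x i u k)). lra.
    + apply Hx_deriv; auto; lra.
  - intros s Hs. rewrite Rmax_left by lra. apply (le_maxR N (fun i => enorm d (v i s))).
    exact Hi.
  - apply continuous_max_speed_clamp.
Qed.

Lemma speed_le t i :
  0 < t -> tau <= t -> (i < N)%nat ->
  enorm d (v i t) <= diam N d x (t - tau) + RInt max_speed (t - tau) (t - sigma).
Proof.
  intros Ht Htau Hi.
  rewrite (enorm_ext d _ (rhs N d psi sigma tau x i t)) by (intros; apply Hsys; auto).
  apply enorm_rhs_le; auto. intros j Hj.
  eapply Rle_trans; [apply enorm_delayed_gap_le; eassumption|].
  apply Rplus_le_compat_l. apply enorm_increment_le_RInt_max_speed; auto; lra.
Qed.

Lemma speed_le_diam_at_0 i : tau = 0 -> (i < N)%nat -> enorm d (v i 0) <= diam N d x 0.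
Proof.
  intros Htau Hi.
  assert (Hclamp := le_at_right_limit (fun s => enorm d (v i (Rmax s 0)))
                      (fun s => diam N d x (Rmax s 0)) 0).
  cbv beta in Hclamp. rewrite Rmax_left in Hclamp by lra. apply Hclamp.
  - apply (continuous_enorm d (fun s => v i (Rmax s 0))). intros k Hk.
    apply (continuous_clamp 0 (fun u => v i u k)). auto.
  - apply (continuous_diam N d (fun j s => x j (Rmax s 0))). intros j k Hj Hk.
    apply continuous_x_clamp; assumption.
  - intros s Hs. rewrite Rmax_left by lra.
    assert (Hsigma0 : sigma = 0) by lra.
    pose proof (speed_le s i Hs ltac:(lra) Hi) as Hle.
    rewrite Htau, Hsigma0, Rminus_0_r, RInt_point in Hle. change zero with 0 in Hle. lra.
Qed.

End DelayedConsensus.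

Theorem lemma3p1 (N d : nat) (sigma tau : R) (psi : R -> R)
  (x v : nat -> R -> nat -> R) :
  (2 <= N)%nat -> (1 <= d)%nat ->
  0 <= sigma -> sigma <= tau ->
  (* psi : [0,oo) -> [0,oo) continuous, nonincreasing, positive, sup psi <= 1 *)
  (forall r, 0 <= r -> cont_within_ge 0 psi r) ->
  (forall r s, 0 <= r -> r <= s -> psi s <= psi r) ->
  (forall r, 0 <= r -> 0 < psi r) ->
  (forall r, 0 <= r -> psi r <= 1) ->
  (* x_i continuous on [-tau, oo) *)
  (forall i k t, (i < N)%nat -> (k < d)%nat -> -tau <= t ->
     cont_within_ge (-tau) (fun s => x i s k) t) ->
  (* x_i differentiable on (0,oo) with derivative v_i, one-sided at 0 *)
  (forall i k t, (i < N)%nat -> (k < d)%nat -> 0 < t ->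
     is_derive (fun s => x i s k) t (v i t k)) ->
  (forall i k, (i < N)%nat -> (k < d)%nat ->
     right_deriv (fun s => x i s k) 0 (v i 0 k)) ->
  (* the derivative is continuous on [0,oo) *)
  (forall i k t, (i < N)%nat -> (k < d)%nat -> 0 <= t ->
     cont_within_ge 0 (fun s => v i s k) t) ->
  (* the delayed consensus system, for t > 0 *)
  (forall i k t, (i < N)%nat -> (k < d)%nat -> 0 < t ->
     v i t k = rhs N d psi sigma tau x i t k) ->
  forall t, tau <= t ->
    maxR N (fun i => enorm d (v i t))
    <= diam N d x (t - tau)
       + RInt (fun s => maxR N (fun i => enorm d (v i s))) (t - tau) (t - sigma).
Proof.
  intros HN _ Hsigma Hsigma_tau _ _ Hpsi_pos Hpsi_le1 Hx_cont Hx_deriv _ Hv_cont Hsys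
    t Ht.
  assert (Hpsi : forall r, 0 <= r -> 0 <= psi r <= 1)
    by (intros r Hr; split; [apply Rlt_le, Hpsi_pos|apply Hpsi_le1]; exact Hr).
  apply maxR_lub.
  { apply Rplus_le_le_0_compat; [apply maxR_ge0|].
    apply (RInt_max_speed_ge0 N d v Hv_cont); lra. }
  intros i Hi. destruct (Rlt_or_le 0 t) as [Ht0|Ht0].
  - eapply speed_le; eassumption.
  - assert (Htau : tau = 0) by lra.
    replace t with 0 by lra. replace sigma with 0 by lra.
    rewrite Htau, Rminus_0_r, RInt_point, Rplus_0_r.
    eapply speed_le_diam_at_0; eassumption.
Qed.
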